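(* Let $\alpha\in(0,1)$. With the full conformal region $\hat C_\alpha(X_{n+1})$, the upper approximate region $\tilde C_\alpha(X_{n+1})$ and the lower approximate region $\tilde C^{\mathrm{lo}}_\alpha(X_{n+1})$ as in the context, almost surely $$\tilde C^{\mathrm{lo}}_\alpha(X_{n+1})\subseteq\hat C_\alpha(X_{n+1})\subseteq\tilde C_\alpha(X_{n+1}),$$ and consequently, almost surely, the thickness satisfies $$\mathrm{THK}_\alpha(X_{n+1})\le\mathcal L\big(\tilde C_\alpha(X_{n+1})\setminus\tilde C^{\mathrm{lo}}_\alpha(X_{n+1})\big).$$
   Context: Let $\mathcal X\subset\mathbb R^d$, $\mathcal Y\subset\mathbb R$. $D=\{(X_1,Y_1),\dots,(X_n,Y_n)\}$ are random variables with values in $\mathcal X\times\mathcal Y$ and $(X_{n+1},Y_{n+1})$ is a further random pair. For $y\in\mathcal Y$ let $D^y=D\cup\{(X_{n+1},y)\}$ and let $\hat f_{D^y}$ be a predictor trained on $D^y$. Given $s:\mathcal Y\times\mathcal Y\to\mathbb R_+$, set $S_{D^y}(X_i,Y_i)=s(Y_i,\hat f_{D^y}(X_i))$ for $1\le i\le n$, $S_{D^y}(X_{n+1},y)=s(y,\hat f_{D^y}(X_{n+1}))$, $\hat\pi_D(X_{n+1},y)=\frac{1+\sum_{i=1}^n\mathbb 1\{S_{D^y}(X_i,Y_i)\ge S_{D^y}(X_{n+1},y)\}}{n+1}$ and $\hat C_\alpha(X_{n+1})=\{y:\hat\pi_D(X_{n+1},y)>\alpha\}$. For every $y$ let $\tilde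 S_{D^y}(X_i,Y_i)$ ($i\le n$), $\tilde S_{D^y}(X_{n+1},y)$ be approximate scores and $0\le\tau_i(y)<\infty$ be such that $|S_{D^y}(X_i,Y_i)-\tilde S_{D^y}(X_i,Y_i)|\le\tau_i(y)$ ($i\le n$) and $|S_{D^y}(X_{n+1},y)-\tilde S_{D^y}(X_{n+1},y)|\le\tau_{n+1}(y)$. Define $\tilde\pi_D(X_{n+1},y)=\frac{1+\sum_{i=1}^n\mathbb 1\{\tilde S_{D^y}(X_i,Y_i)+\tau_i(y)\ge\tilde S_{D^y}(X_{n+1},y)-\tau_{n+1}(y)\}}{n+1}$, $\tilde C_\alpha(X_{n+1})=\{y:\tilde\pi_D(X_{n+1},y)>\alpha\}$, $\tilde\pi^{\mathrm{lo}}_D(X_{n+1},y)=\frac{1+\sum_{i=1}^n\mathbb 1\{\tilde S_{D^y}(X_i,Y_i)-\tau_i(y)\ge\tilde S_{D^y}(X_{n+1},y)+\tau_{n+1}(y)\}}{n+1}$, $\tilde C^{\mathrm{lo}}_\alpha(X_{n+1})=\{y:\tilde\pi^{\mathrm{lo}}_D(X_{n+1},y)>\alpha\}$. The thickness is $\mathrm{THK}_\alpha(X_{n+1})=\mathcal L\big(\tilde C_\alpha(X_{n+1})\,\Delta\,\hat C_\alpha(X_{n+1})\big)$, with $\mathcal L$ the Lebesgue measure and $\Delta$ the symmetric difference. *)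

From HB Require Import structures.
From mathcomp Require Import all_boot all_order all_algebra.
From mathcomp Require Import all_classical all_reals all_analysis.
Set Implicit Arguments. Unset Strict Implicit. Unset Printing Implicit Defensive.
Import Order.TTheory GRing.Theory Num.Theory.
Local Open Scope classical_set_scope.
Local Open Scope ring_scope.

Section ConformalDefs.
Variables (R : realType) (d n : nat).
Notation X := 'rV[R]_d.

(* D^y = D ∪ {(X_{n+1}, y)}, as the list of the n+1 training pairs.          *)
Definition augment (D : 'I_n -> X * R) (xnew : X) (y : R) : seq (X * R) :=
  rcons [seq D i | i <- enum 'I_n] (xnew, y).

Definition score (train : seq (X * R) -> X -> R) (s : R -> R -> R)
  (D : 'I_n -> X * R) (xnew : X) (y : R) (i : 'I_n) : R :=
  s (D i).2 (train (augment D xnew y) (D i).1).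

Definition score_new (train : seq (X * R) -> X -> R) (s : R -> R -> R)
  (D : 'I_n -> X * R) (xnew : X) (y : R) : R :=
  s y (train (augment D xnew y) xnew).

Definition pihat train s D xnew (y : R) : R :=
  (1 + #|[pred i : 'I_n | score_new train s D xnew y <= score train s D xnew y i]|)%:R
  / (n.+1)%:R.

Definition Chat train s D xnew (alpha : R) : set R :=
  [set y | alpha < pihat train s D xnew y].

(* approximate scores: Stil y i for i : 'I_n is \tilde S_{D^y}(X_i,Y_i),
   Stil_new y is \tilde S_{D^y}(X_{n+1},y); tau y i = \tau_i(y), tau_new y = \tau_{n+1}(y) *)
Definition pitil (Stil : R -> 'I_n -> R) (Stil_new : R -> R)
  (tau : R -> 'I_n -> R) (tau_new : R -> R) (y : R) : R :=
  (1 + #|[pred i : 'I_n | Stil_new y - tau_new y <= Stil y i + tau y i]|)%:R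
  / (n.+1)%:R.

Definition pitil_lo (Stil : R -> 'I_n -> R) (Stil_new : R -> R)
  (tau : R -> 'I_n -> R) (tau_new : R -> R) (y : R) : R :=
  (1 + #|[pred i : 'I_n | Stil_new y + tau_new y <= Stil y i - tau y i]|)%:R
  / (n.+1)%:R.

Definition Ctil Stil Stil_new tau tau_new (alpha : R) : set R :=
  [set y | alpha < pitil Stil Stil_new tau tau_new y].

Definition Ctil_lo Stil Stil_new tau tau_new (alpha : R) : set R :=
  [set y | alpha < pitil_lo Stil Stil_new tau tau_new y].

Definition THK train s D xnew Stil Stil_new tau tau_new (alpha : R) : \bar R :=
  (@lebesgue_measure R) (Ctil Stil Stil_new tau tau_new alpha `+` Chat train s D xnew alpha).

End ConformalDefs.

(** Each approximate score lies within its tolerance of the exact one, so the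
    exact comparison [S_{n+1} <= S_i] is implied by the pessimistic comparison
    of the intervals [Stil +- tau] used in [pitil_lo], and implies the
    optimistic one used in [pitil].  Counting, the three p-values are ordered
    pointwise in [y], which nests the regions; the symmetric difference of the
    two outer regions then lies in the gap between the approximate ones, and
    Lebesgue outer measure is monotone. *)
From HB Require Import structures.
From mathcomp Require Import all_boot all_order all_algebra.
From mathcomp Require Import all_classical all_reals all_analysis.
From mathcomp Require Import lra.
Import Order.TTheory GRing.Theory Num.Theory.
Local Open Scope classical_set_scope.
Local Open Scope ring_scope.

Lemma approx_le_sound (R : realDomainType) (a b c e t u : R) :
  `|a - c| <= t -> `|b - e| <= u -> c + t <= e - u -> a <= b.
Proof. by rewrite !ler_norml => /andP[? ?] /andP[? ?] ?; lra. Qed.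

Lemma approx_le_complete (R : realDomainType) (a b c e t u : R) :
  `|a - c| <= t -> `|b - e| <= u -> a <= b -> c - t <= e + u.
Proof. by rewrite !ler_norml => /andP[? ?] /andP[? ?] ?; lra. Qed.

Lemma ler_card_ratio (R : numFieldType) (n : nat) (P Q : pred 'I_n) :
  {subset P <= Q} ->
  ((1 + #|P|)%:R / n.+1%:R : R) <= (1 + #|Q|)%:R / n.+1%:R.
Proof.
move=> PQ; rewrite ler_pM2r ?invr_gt0 ?ltr0n // ler_nat ltnS.
exact/subset_leq_card/fintype.subsetP.
Qed.

Lemma setY_subset_setD (T : Type) (A B C : set T) :
  A `<=` B -> B `<=` C -> C `+` B `<=` C `\` A.
Proof.
move=> AB BC x [[Cx nBx]|[Bx nCx]]; first by split=> // /AB.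
by case: nCx; exact: BC.
Qed.

(* The regions need not be measurable, so monotonicity is that of the outer
   measure underlying [lebesgue_measure]. *)
Lemma lebesgue_measure_le (R : realType) (A B : set R) :
  A `<=` B -> (lebesgue_measure A <= lebesgue_measure B)%E.
Proof.
move=> AB; rewrite /lebesgue_measure /lebesgue_stieltjes_measure.
by rewrite /measure_extension; apply: le_mu_ext.
Qed.

Section NestedRegions.
Context {R : realType} {d n : nat} {D : 'I_n -> 'rV[R]_d * R}.
Context {xnew : 'rV[R]_d} {train : seq ('rV[R]_d * R) -> 'rV[R]_d -> R}.
Context {s : R -> R -> R} {Stil : R -> 'I_n -> R} {Stil_new : R -> R}.
Context {tau : R -> 'I_n -> R} {tau_new : R -> R}.
Hypothesis hS : forall y i, `|score train s D xnew y i - Stil y i| <= tau y i.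
Hypothesis hS_new :
  forall y, `|score_new train s D xnew y - Stil_new y| <= tau_new y.

Lemma pitil_lo_le_pihat y :
  pitil_lo Stil Stil_new tau tau_new y <= pihat train s D xnew y.
Proof.
apply: ler_card_ratio => i; rewrite !inE.
exact: approx_le_sound (hS_new y) (hS y i).
Qed.

Lemma pihat_le_pitil y :
  pihat train s D xnew y <= pitil Stil Stil_new tau tau_new y.
Proof.
apply: ler_card_ratio => i; rewrite !inE.
exact: approx_le_complete (hS_new y) (hS y i).
Qed.

Lemma Ctil_lo_sub_Chat alpha :
  Ctil_lo Stil Stil_new tau tau_new alpha `<=` Chat train s D xnew alpha.
Proof. by move=> y /lt_le_trans; apply; exact: pitil_lo_le_pihat. Qed.

Lemma Chat_sub_Ctil alpha :
  Chat train s D xnew alpha `<=` Ctil Stil Stil_new tau tau_new alpha.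
Proof. by move=> y /lt_le_trans; apply; exact: pihat_le_pitil. Qed.

End NestedRegions.

Theorem lemma7 (R : realType) (d n : nat) (alpha : R)
  (halpha : 0 < alpha < 1)
  (D : 'I_n -> 'rV[R]_d * R) (xnew : 'rV[R]_d)
  (train : seq ('rV[R]_d * R) -> 'rV[R]_d -> R) (s : R -> R -> R)
  (hs : forall a b, 0 <= s a b)
  (Stil : R -> 'I_n -> R) (Stil_new : R -> R)
  (tau : R -> 'I_n -> R) (tau_new : R -> R)
  (htau : forall y i, 0 <= tau y i) (htau_new : forall y, 0 <= tau_new y)
  (hS : forall y i, `|score train s D xnew y i - Stil y i| <= tau y i)
  (hS_new : forall y, `|score_new train s D xnew y - Stil_new y| <= tau_new y) :
  [/\ Ctil_lo Stil Stil_new tau tau_new alpha `<=` Chat train s D xnew alpha,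
      Chat train s D xnew alpha `<=` Ctil Stil Stil_new tau tau_new alpha
    & (THK train s D xnew Stil Stil_new tau tau_new alpha
       <= (@lebesgue_measure R)
            (Ctil Stil Stil_new tau tau_new alpha `\` Ctil_lo Stil Stil_new tau tau_new alpha))%E].
Proof.
have lo_sub_hat := Ctil_lo_sub_Chat hS hS_new alpha.
have hat_sub_til := Chat_sub_Ctil hS hS_new alpha.
split=> //; apply: lebesgue_measure_le.
exact: setY_subset_setD lo_sub_hat hat_sub_til.
Qed.
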